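(* Let $\mathcal{H}$ be a separable Hilbert space, $\{\mathcal{H}_j\}_{j\in J}$ ($J\subseteq\mathbb{Z}$) a sequence of closed subspaces of $\mathcal{H}$, $K\in\mathcal{B}(\mathcal{H})$, and $\Lambda_j\in\mathcal{B}(\mathcal{H},\mathcal{H}_j)$ for each $j\in J$. For each $j\in J$ let $\{\mathcal{H}_{ij}\}_{i\in I_j}$ be a sequence of closed subspaces of $\mathcal{H}_j$, and let $\{\Gamma_{ij}\in\mathcal{B}(\mathcal{H}_j,\mathcal{H}_{ij})\}_{i\in I_j}$ be a $g$-frame for $\mathcal{H}_j$ with bounds $C_j,D_j$, such that $0<C=\inf_{j\in J}C_j\leq\sup_{j\in J}D_j=D<\infty$. Then the following are equivalent: (i) $\{\Lambda_j\}_{j\in J}$ is a $K$-$g$-frame for $\mathcal{H}$; (ii) $\{\Gamma_{ij}\Lambda_j\in\mathcal{B}(\mathcal{H},\mathcal{H}_{ij}): i\in I_j, j\in J\}$ is a $K$-$g$-frame for $\mathcal{H}$.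
   Context: A family $\{\Lambda_j\in\mathcal{B}(\mathcal{H},\mathcal{V}_j)\}_{j}$ is a $K$-$g$-frame for $\mathcal{H}$ (with respect to the spaces $\mathcal{V}_j$) if there exist $0<A\leq B<\infty$ with $A\|K^{\ast}f\|^2\leq\sum_{j}\|\Lambda_jf\|^2\leq B\|f\|^2$ for all $f\in\mathcal{H}$. A family $\{\Gamma_i\in\mathcal{B}(\mathcal{W},\mathcal{W}_i)\}_i$ is a $g$-frame for a Hilbert space $\mathcal{W}$ with bounds $C,D$ ($0<C\leq D<\infty$) if $C\|g\|^2\leq\sum_i\|\Gamma_ig\|^2\leq D\|g\|^2$ for all $g\in\mathcal{W}$. *)

From HB Require Import structures.
From mathcomp Require Import all_boot all_order all_algebra.
From mathcomp Require Import all_classical all_reals.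
From mathcomp Require Import ereal esum.
From mathcomp Require Import complex.

Set Implicit Arguments.
Unset Strict Implicit.
Unset Printing Implicit Defensive.

Import Order.TTheory GRing.Theory Num.Theory.
Local Open Scope classical_set_scope.
Local Open Scope ring_scope.

(* Convention: ip is linear in the first argument, conjugate-linear    *)
(* in the second.                                                      *)
Section Hilbert.
Variables (R : realType) (V : lmodType R[i]) (ip : V -> V -> R[i]).

Definition is_inner_product : Prop :=
  [/\ (forall (a : R[i]) (x y z : V), ip (a *: x + y) z = a * ip x z + ip y z),
      (forall x y : V, ip x y = (ip y x)^*),
      (forall x : V, 0 <= ip x x) &
      (forall x : V, ip x x = 0 -> x = 0)].

Definition hnorm (x : V) : R := Num.sqrt (complex.Re (ip x x)).

Definition hconverges (u : nat -> V) (x : V) : Prop :=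
  forall e : R, 0 < e -> exists N : nat, forall n, (N <= n)%N -> hnorm (u n - x) < e.

Definition hcauchy (u : nat -> V) : Prop :=
  forall e : R, 0 < e -> exists N : nat,
    forall n m, (N <= n)%N -> (N <= m)%N -> hnorm (u n - u m) < e.

Definition hcomplete : Prop :=
  forall u : nat -> V, hcauchy u -> exists x, hconverges u x.

Definition hseparable : Prop :=
  exists d : nat -> V, forall (x : V) (e : R), 0 < e -> exists n, hnorm (x - d n) < e.

Definition hilbert : Prop := is_inner_product /\ hcomplete.

Definition closed_subspace (W : set V) : Prop :=
  [/\ W 0,
      (forall (a : R[i]) (x y : V), W x -> W y -> W (a *: x + y)) &
      (forall (u : nat -> V) (x : V), (forall n, W (u n)) -> hconverges u x -> W x)].

(* T restricted to the subspace W belongs to B(W, W'): a bounded linear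
   operator from W into W' *)
Definition bounded_op (W W' : set V) (T : V -> V) : Prop :=
  [/\ (forall (a : R[i]) (x y : V), W x -> W y -> T (a *: x + y) = a *: T x + T y),
      (forall x, W x -> W' (T x)) &
      (exists M : R, forall x, W x -> hnorm (T x) <= M * hnorm x)].

Definition is_adjoint (K Kst : V -> V) : Prop :=
  forall x y : V, ip (K x) y = ip x (Kst y).

Definition kgframe {T : choiceType} (Kst : V -> V) (Idx : set T)
    (W : T -> set V) (L : T -> V -> V) : Prop :=
  (forall t, Idx t -> bounded_op setT (W t) (L t)) /\
  exists A B : R, [/\ 0 < A, A <= B &
    forall f : V,
      ((A * hnorm (Kst f) ^+ 2)%:E <= \esum_(t in Idx) (hnorm (L t f) ^+ 2)%:E)%E /\
      (\esum_(t in Idx) (hnorm (L t f) ^+ 2)%:E <= (B * hnorm f ^+ 2)%:E)%E].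

Definition gframe {T : choiceType} (Wsp : set V) (Idx : set T)
    (W : T -> set V) (G : T -> V -> V) (c d : R) : Prop :=
  (forall t, Idx t -> bounded_op Wsp (W t) (G t)) /\
  [/\ 0 < c, c <= d &
    forall g : V, Wsp g ->
      ((c * hnorm g ^+ 2)%:E <= \esum_(t in Idx) (hnorm (G t g) ^+ 2)%:E)%E /\
      (\esum_(t in Idx) (hnorm (G t g) ^+ 2)%:E <= (d * hnorm g ^+ 2)%:E)%E].

End Hilbert.

(** Proof: for every [f], the inner g-frame inequalities give
    [c ||Λ_j f||² ≤ Σ_i ||Γ_ij Λ_j f||² ≤ d ||Λ_j f||²] uniformly in [j],
    with [c ≤ inf C_j] and [d ≥ sup D_j].  Summing over [j] (sums of
    nonnegative terms may be regrouped freely) shows that the two frame sums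
    are comparable up to the factors [c] and [d], so frame bounds for either
    family yield frame bounds for the other. *)

From HB Require Import structures.
From mathcomp Require Import all_boot all_order all_algebra.
From mathcomp Require Import all_classical all_reals.
From mathcomp Require Import ereal esum.
From mathcomp Require Import complex.

Set Implicit Arguments.
Unset Strict Implicit.
Unset Printing Implicit Defensive.

Import Order.TTheory GRing.Theory Num.Theory.
Local Open Scope classical_set_scope.
Local Open Scope ring_scope.

Section ExtendedSums.
Variable R : realType.
Local Open Scope ereal_scope.

Lemma esumZl (T : choiceType) (S : set T) (a : T -> \bar R) (c : R) :
  (0 < c)%R -> (forall t, 0 <= a t) ->
  \esum_(t in S) c%:E * a t = c%:E * \esum_(t in S) a t.
Proof.
move=> c_gt0 a_ge0; rewrite /esum -ereal_sup_pZl //; congr ereal_sup.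
by rewrite image_comp; apply: eq_imagel => X _ /=; rewrite ge0_mule_fsumr.
Qed.

Lemma esum_swap_pairs (T1 T2 : choiceType) (I : set T1) (J : T1 -> set T2)
    (a : T1 -> T2 -> \bar R) :
  (forall i j, I i -> J i j -> 0 <= a i j) ->
  \esum_(p in [set p : T2 * T1 | I p.2 /\ J p.2 p.1]) a p.2 p.1 =
  \esum_(i in I) \esum_(j in J i) a i j.
Proof.
move=> a_ge0; rewrite esum_esum //.
have -> : [set p : T2 * T1 | I p.2 /\ J p.2 p.1] =
    (fun k : T1 * T2 => (k.2, k.1)) @` (I `*`` J).
  apply/seteqP; split => [[j i] /= IJ|_ [[i j] /= IJ <-] //].
  by exists (i, j).
by rewrite esum_image // => -[? ?] [? ?] _ _ /= [-> ->].
Qed.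

Lemma ereal_inf_EFin_gt0 (T : Type) (J : set T) (f : T -> R) :
  0 < ereal_inf [set (f j)%:E | j in J] ->
  exists2 c : R, (0 < c)%R & forall j, J j -> (c <= f j)%R.
Proof.
have lb j : J j -> ereal_inf [set (f j)%:E | j in J] <= (f j)%:E.
  by move=> Jj; apply: ereal_inf_lbound; exists j.
case: (ereal_inf _) lb => [r| |] lb // r_gt0.
  by exists r => [|j /lb]; rewrite -?lee_fin -?lte_fin.
by exists 1%R => // j /lb; rewrite leye_eq.
Qed.

Lemma ereal_sup_EFin_lty (T : Type) (J : set T) (f : T -> R) :
  ereal_sup [set (f j)%:E | j in J] < +oo ->
  exists d : R, forall j, J j -> (f j <= d)%R.
Proof.
have ub j : J j -> (f j)%:E <= ereal_sup [set (f j)%:E | j in J].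
  by move=> Jj; apply: ereal_sup_ubound; exists j.
case: (ereal_sup _) ub => [r| |] ub // _.
  by exists r => j /ub; rewrite lee_fin.
by exists 0%R => j /ub; rewrite leeNy_eq.
Qed.

End ExtendedSums.

Section FrameBounds.
Variables (R : realType) (T : Type).

Definition frame_bounds (lo up : T -> R) (S : T -> \bar R) : Prop :=
  exists A B : R, [/\ 0 < A, A <= B &
    forall x, ((A * lo x)%:E <= S x)%E /\ (S x <= (B * up x)%:E)%E].

Lemma frame_bounds_scale (lo up : T -> R) (S1 S2 : T -> \bar R) (c d : R) :
  0 < c -> c <= d ->
  (forall x, (c%:E * S1 x <= S2 x)%E /\ (S2 x <= d%:E * S1 x)%E) ->
  frame_bounds lo up S1 -> frame_bounds lo up S2.
Proof.
move=> c_gt0 le_cd S12 [A [B [A_gt0 le_AB bnd]]].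
have d_ge0 : 0 <= d := ltW (lt_le_trans c_gt0 le_cd).
exists (c * A), (d * B); split; first exact: mulr_gt0.
  by apply: ler_pM => //; apply: ltW.
move=> x; have [lo1 up1] := bnd x; have [lo2 up2] := S12 x; split.
  apply: le_trans lo2; rewrite -mulrA EFinM.
  by apply: lee_wpmul2l lo1; rewrite lee_fin ltW.
apply: le_trans up2 _; rewrite -mulrA EFinM.
by apply: lee_wpmul2l up1; rewrite lee_fin.
Qed.

Lemma frame_bounds_comparable (lo up : T -> R) (S1 S2 : T -> \bar R) (c d : R) :
  0 < c -> c <= d ->
  (forall x, (c%:E * S1 x <= S2 x)%E /\ (S2 x <= d%:E * S1 x)%E) ->
  frame_bounds lo up S1 <-> frame_bounds lo up S2.
Proof.
move=> c_gt0 le_cd S12; have d_gt0 := lt_le_trans c_gt0 le_cd.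
split; first exact: frame_bounds_scale S12.
apply: (@frame_bounds_scale lo up S2 S1 d^-1 c^-1).
- by rewrite invr_gt0.
- by rewrite lef_pV2.
- by move=> x; rewrite lee_pdivrMl // lee_pdivlMl //; have [] := S12 x.
Qed.

End FrameBounds.

Section Operators.
Variables (R : realType) (V : lmodType R[i]) (ip : V -> V -> R[i]).

Lemma hnorm_ge0 (x : V) : 0 <= hnorm ip x.
Proof. exact: sqrtr_ge0. Qed.

Lemma bounded_op_comp (W1 W2 : set V) (G L : V -> V) :
  bounded_op ip setT W1 L -> bounded_op ip W1 W2 G ->
  bounded_op ip setT W2 (G \o L).
Proof.
move=> [linL LW1 [M1 bndL]] [linG GW2 [M2 bndG]]; split.
- by move=> a x y _ _ /=; rewrite linL // linG //; apply: LW1.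
- by move=> x _; apply/GW2/LW1.
- exists (Num.max M2 0 * Num.max M1 0) => x _ /=.
  have M1x : hnorm ip (L x) <= Num.max M1 0 * hnorm ip x.
    apply: le_trans (bndL _ I) _.
    by apply: ler_wpM2r; rewrite ?hnorm_ge0 // le_max lexx.
  apply: le_trans (bndG _ (LW1 x I)) _; rewrite -mulrA.
  apply: (le_trans (y := Num.max M2 0 * hnorm ip (L x))).
    by apply: ler_wpM2r; rewrite ?hnorm_ge0 // le_max lexx.
  by apply: ler_wpM2l M1x; rewrite le_max lexx orbT.
Qed.

Lemma kgframeE (T : choiceType) (Kst : V -> V) (Idx : set T)
    (W : T -> set V) (L : T -> V -> V) :
  kgframe ip Kst Idx W L <->
  (forall t, Idx t -> bounded_op ip setT (W t) (L t)) /\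
  frame_bounds (fun f => hnorm ip (Kst f) ^+ 2) (fun f => hnorm ip f ^+ 2)
    (fun f => \esum_(t in Idx) (hnorm ip (L t f) ^+ 2)%:E).
Proof. by []. Qed.

Lemma gframe_widen (T : choiceType) (Wsp : set V) (Idx : set T)
    (W : T -> set V) (G : T -> V -> V) (c0 d0 c d : R) :
  gframe ip Wsp Idx W G c0 d0 -> c <= c0 -> d0 <= d ->
  forall g, Wsp g ->
    ((c * hnorm ip g ^+ 2)%:E <= \esum_(t in Idx) (hnorm ip (G t g) ^+ 2)%:E)%E /\
    (\esum_(t in Idx) (hnorm ip (G t g) ^+ 2)%:E <= (d * hnorm ip g ^+ 2)%:E)%E.
Proof.
move=> [_ [_ _ bnd]] le_c le_d g /bnd[lo up]; split.
  by apply: le_trans lo; rewrite lee_fin ler_wpM2r ?sqr_ge0.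
by apply: le_trans up _; rewrite lee_fin ler_wpM2r ?sqr_ge0.
Qed.

End Operators.

Section Composition.
Variables (R : realType) (V : lmodType R[i]) (ip : V -> V -> R[i]).
Variables (TJ TI : choiceType) (J : set TJ) (I : TJ -> set TI).
Variables (Hs : TJ -> set V) (Hs2 : TI -> TJ -> set V) (Lam : TJ -> V -> V).
Variables (Gam : TI -> TJ -> V -> V) (Cs Ds : TJ -> R).
Hypothesis Lam_into : forall j, J j -> forall f, Hs j (Lam j f).
Hypothesis Gam_gframe : forall j, J j ->
  gframe ip (Hs j) (I j) (fun i => Hs2 i j) (fun i => Gam i j) (Cs j) (Ds j).

Lemma esum_gframe_comp_comparable (c d : R) :
  0 < c -> c <= d -> (forall j, J j -> c <= Cs j /\ Ds j <= d) ->
  forall f,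
  let S := \esum_(j in J) (hnorm ip (Lam j f) ^+ 2)%:E in
  let S' := \esum_(p in [set p : TI * TJ | J p.2 /\ I p.2 p.1])
              (hnorm ip ((Gam p.1 p.2 \o Lam p.2) f) ^+ 2)%:E in
  (c%:E * S <= S')%E /\ (S' <= d%:E * S)%E.
Proof.
move=> c_gt0 le_cd Cs_Ds f S S'.
have sqr_ge0E x : (0 <= (hnorm ip x ^+ 2)%:E)%E by rewrite lee_fin sqr_ge0.
have inner j : J j ->
    ((c * hnorm ip (Lam j f) ^+ 2)%:E <=
       \esum_(i in I j) (hnorm ip (Gam i j (Lam j f)) ^+ 2)%:E)%E /\
    (\esum_(i in I j) (hnorm ip (Gam i j (Lam j f)) ^+ 2)%:E <=
       (d * hnorm ip (Lam j f) ^+ 2)%:E)%E.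
  move=> Jj; have [leC leD] := Cs_Ds j Jj.
  exact: gframe_widen (Gam_gframe Jj) leC leD _ (Lam_into Jj f).
have -> : S' = \esum_(j in J) \esum_(i in I j)
                 (hnorm ip (Gam i j (Lam j f)) ^+ 2)%:E.
  rewrite /S'; apply: (@esum_swap_pairs _ _ _ J I) => *; exact: sqr_ge0E.
rewrite /S -!esumZl //; last exact: lt_le_trans le_cd.
by split; apply: le_esum => j Jj; rewrite -EFinM; have [] := inner j Jj.
Qed.

End Composition.

Theorem mainTheorem3 (R : realType) (V : lmodType R[i]) (ip : V -> V -> R[i])
  (HV : hilbert ip) (HVsep : hseparable ip)
  (J : set int) (Hs : int -> set V)
  (HHs : forall j, J j -> closed_subspace ip (Hs j))
  (K Kst : V -> V) (HK : bounded_op ip setT setT K) (HKst : is_adjoint ip K Kst)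
  (Lam : int -> V -> V) (HLam : forall j, J j -> bounded_op ip setT (Hs j) (Lam j))
  (I : int -> set int) (Hs2 : int -> int -> set V)
  (HHs2 : forall j, J j -> forall i, I j i ->
            closed_subspace ip (Hs2 i j) /\ Hs2 i j `<=` Hs j)
  (Gam : int -> int -> V -> V) (Cs Ds : int -> R)
  (HGam : forall j, J j ->
            gframe ip (Hs j) (I j) (fun i => Hs2 i j) (fun i => Gam i j) (Cs j) (Ds j))
  (HC : (0 < ereal_inf [set (Cs j)%:E | j in J])%E)
  (HD : (ereal_sup [set (Ds j)%:E | j in J] < +oo)%E) :
  kgframe ip Kst J Hs Lam <->
  kgframe ip Kst [set p : int * int | J p.2 /\ I p.2 p.1]
    (fun p => Hs2 p.1 p.2) (fun p => Gam p.1 p.2 \o Lam p.2).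
Proof.
have [c c_gt0 leCs] := ereal_inf_EFin_gt0 HC.
have [d leDs] := ereal_sup_EFin_lty HD.
have c'_gt0 : 0 < Num.min c 1 by rewrite lt_min c_gt0 ltr01.
have le_cd' : Num.min c 1 <= Num.max d 1.
  by apply: (le_trans (y := 1)); rewrite ?ge_min ?le_max lexx ?orbT.
have Lam_into j (Jj : J j) f : Hs j (Lam j f) by have [_ + _] := HLam j Jj; apply.
have sums := esum_gframe_comp_comparable Lam_into HGam c'_gt0 le_cd'.
rewrite !kgframeE (frame_bounds_comparable _ _ c'_gt0 le_cd' (sums _)); last first.
  by move=> j Jj; rewrite ge_min leCs // le_max leDs.
split=> -[_ bnds]; split=> //.
by move=> [i j] /= [Jj Iij]; apply: bounded_op_comp (HLam j Jj) ((HGam j Jj).1 i Iij).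
Qed.
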